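(* Assume $0<b\gamma-m\mu<\mu^2$, so that $E_4=\Big(\frac{\mu^2-b\gamma+m\mu}{\mu\gamma},\frac{b\gamma-m\mu}{\mu\gamma},0,0\Big)$ has strictly positive $B$- and $I$-components. Then the Jacobian matrix of system (S) at $E_4$ never has a pair of nonzero purely imaginary eigenvalues; in particular, no Hopf bifurcation can occur at $E_4$ as parameters vary within this feasibility region.
   Context: The model (S) is the system of ODEs for healthy bees $B$, infected bees $I$, healthy mites $M$ and infected mites $N$: $$B'=b\frac{B}{B+I}-\lambda BN-\gamma BI-mB,$$ $$I'=b\frac{I}{B+I}+\lambda BN+\gamma BI-(m+\mu)I,$$ $$M'=r\Big(1-\frac{M+N}{K}\Big)(M+N)-\beta MI-\delta MN-eMB,$$ $$N'=-nN-pN(N+M)+\beta MI+\delta MN-eNB,$$ where all parameters $b,\lambda,\gamma,m,\mu,r,K,\beta,\delta,e,n,p$ are positive constants. *)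

From HB Require Import structures.
From mathcomp Require Import all_boot all_order all_algebra.
Set Implicit Arguments. Unset Strict Implicit. Unset Printing Implicit Defensive.
Import Order.TTheory GRing.Theory Num.Theory.
Local Open Scope ring_scope.

(* Entry (i,j) of the Jacobian of system (S) at the point (B,I,M,N);
   variables ordered 0 = B, 1 = I, 2 = M, 3 = N (rows = equations B',I',M',N'). *)
Definition jacS_entry (F : fieldType)
  (b lam gam m mu r K beta delta e n p : F) (B I M N : F) (i j : nat) : F :=
  match i, j with
  (* B' = b B/(B+I) - lam B N - gam B I - m B *)
  | 0, 0 => b * I / (B + I) ^+ 2 - lam * N - gam * I - m
  | 0, 1 => - (b * B / (B + I) ^+ 2) - gam * B
  | 0, 2 => 0
  | 0, 3 => - (lam * B)
  (* I' = b I/(B+I) + lam B N + gam B I - (m+mu) I *)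
  | 1, 0 => - (b * I / (B + I) ^+ 2) + lam * N + gam * I
  | 1, 1 => b * B / (B + I) ^+ 2 + gam * B - (m + mu)
  | 1, 2 => 0
  | 1, 3 => lam * B
  (* M' = r (1 - (M+N)/K) (M+N) - beta M I - delta M N - e M B *)
  | 2, 0 => - (e * M)
  | 2, 1 => - (beta * M)
  | 2, 2 => r * (1 - 2%:R * (M + N) / K) - beta * I - delta * N - e * B
  | 2, 3 => r * (1 - 2%:R * (M + N) / K) - delta * M
  (* N' = - n N - p N (N+M) + beta M I + delta M N - e N B *)
  | 3, 0 => - (e * N)
  | 3, 1 => beta * M
  | 3, 2 => - (p * N) + beta * I + delta * N
  | 3, 3 => - n - p * (2%:R * N + M) + delta * M - e * B
  | _, _ => 0
  end.

Definition jacS (F : fieldType)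
  (b lam gam m mu r K beta delta e n p : F) (B I M N : F) : 'M[F]_4 :=
  \matrix_(i < 4, j < 4) jacS_entry b lam gam m mu r K beta delta e n p B I M N i j.

Definition E4_B (F : fieldType) (b gam m mu : F) : F :=
  (mu ^+ 2 - b * gam + m * mu) / (mu * gam).
Definition E4_I (F : fieldType) (b gam m mu : F) : F :=
  (b * gam - m * mu) / (mu * gam).

Definition jacS_E4 (F : fieldType) (b lam gam m mu r K beta delta e n p : F) : 'M[F]_4 :=
  jacS b lam gam m mu r K beta delta e n p (E4_B b gam m mu) (E4_I b gam m mu) 0 0.

From HB Require Import structures.
From mathcomp Require Import all_boot all_order all_algebra.
From mathcomp Require Import ring.
Import Order.TTheory GRing.Theory Num.Theory.
Set Implicit Arguments. Unset Strict Implicit. Unset Printing Implicit Defensive.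
Local Open Scope ring_scope.

(* At E4 there are no mites, so the Jacobian is block upper triangular and its
   spectrum is that of the two diagonal 2x2 blocks (bees and mites).  A real
   2x2 block has an eigenvalue i w with w real and nonzero only if its trace
   vanishes and its determinant equals w^2 > 0.  The trace of the bee block is
   -b gam / mu < 0, and the off-diagonal product of the mite block is
   r beta I >= 0, so once its trace vanishes its determinant -a^2 - r beta I is
   nonpositive. *)

Definition char_poly2 (F : pzRingType) (a b c d l : F) : F := (a - l) * (d - l) - b * c.

Lemma left_eigvec2_eq0 (F : idomainType) (x y a b c d l : F) :
  x * a + y * c = l * x -> x * b + y * d = l * y ->
  char_poly2 a b c d l != 0 -> x = 0 /\ y = 0.
Proof.
move=> eq_x eq_y ch_neq0.
have x_ch : x * char_poly2 a b c d l = 0.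
  transitivity ((d - l) * (x * a + y * c - l * x) - c * (x * b + y * d - l * y)).
    by rewrite /char_poly2; ring.
  by rewrite eq_x eq_y !subrr !mulr0 subrr.
have y_ch : y * char_poly2 a b c d l = 0.
  transitivity ((a - l) * (x * b + y * d - l * y) - b * (x * a + y * c - l * x)).
    by rewrite /char_poly2; ring.
  by rewrite eq_x eq_y !subrr !mulr0 subrr.
move/eqP: x_ch; move/eqP: y_ch; rewrite !mulf_eq0 (negbTE ch_neq0) !orbF.
by move=> /eqP -> /eqP ->.
Qed.

Lemma big_ord4 (R : nmodType) (f : 'I_4 -> R) : \sum_i f i = f 0 + f 1 + f 2 + f 3.
Proof.
rewrite !big_ord_recl big_ord0 addr0 !addrA.
by congr (_ + _ + _ + _); congr f; apply: val_inj.
Qed.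

Lemma eigenvalue_ublock4 (F : fieldType) (A : 'M[F]_4) l :
  (forall i j : 'I_4, (1 < i)%N -> (j < 2)%N -> A i j = 0) ->
  eigenvalue A l ->
  char_poly2 (A 0 0) (A 0 1) (A 1 0) (A 1 1) l = 0 \/
  char_poly2 (A 2 2) (A 2 3) (A 3 2) (A 3 3) l = 0.
Proof.
move=> A_low /eigenvalueP[v vA v_neq0].
have col j : v 0 0 * A 0 j + v 0 1 * A 1 j + v 0 2 * A 2 j + v 0 3 * A 3 j = l * v 0 j.
  by have := congr1 (fun M : 'rV_4 => M 0 j) vA; rewrite !mxE big_ord4.
have [top|top] := eqVneq (char_poly2 (A 0 0) (A 0 1) (A 1 0) (A 1 1) l) 0; first by left.
right; apply/eqP; apply: contraNT v_neq0 => bot.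
have [v0 v1] : v 0 0 = 0 /\ v 0 1 = 0.
  apply: left_eigvec2_eq0 top.
  - by have := col 0; rewrite (A_low 2 0) ?(A_low 3 0) // !mulr0 !addr0.
  - by have := col 1; rewrite (A_low 2 1) ?(A_low 3 1) // !mulr0 !addr0.
have [v2 v3] : v 0 2 = 0 /\ v 0 3 = 0.
  apply: left_eigvec2_eq0 bot.
  - by have := col 2; rewrite v0 v1 !mul0r !add0r.
  - by have := col 3; rewrite v0 v1 !mul0r !add0r.
apply/eqP/rowP => j; rewrite mxE.
by case: j => [[|[|[|[|//]]]] j_lt]; [rewrite -v0|rewrite -v1|rewrite -v2|rewrite -v3];
  congr (v 0 _); apply: val_inj.
Qed.

Section ImaginaryRoots.
Variable C : numClosedFieldType.
Variables a b c d w : C.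
Hypotheses (a_real : a \is Num.real) (b_real : b \is Num.real).
Hypotheses (c_real : c \is Num.real) (d_real : d \is Num.real).
Hypotheses (w_real : w \is Num.real) (w_neq0 : w != 0).

Lemma char_poly2_imag_root :
  char_poly2 a b c d ('i * w) = 0 -> a + d = 0 /\ a * d - b * c = w ^+ 2.
Proof.
have rect : char_poly2 a b c d ('i * w)
    = (a * d - b * c - w ^+ 2) + 'i * (- (w * (a + d))).
  have ii : 'i * 'i = -1 :> C by rewrite -expr2 sqrCi.
  apply/eqP; rewrite -subr_eq0; apply/eqP.
  transitivity (w ^+ 2 * ('i * 'i + 1)); first by rewrite /char_poly2; ring.
  by rewrite ii addNr mulr0.
have re_real : a * d - b * c - w ^+ 2 \is Num.real by rewrite !rpredB ?rpredM ?rpredX.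
have im_real : - (w * (a + d)) \is Num.real by rewrite rpredN rpredM ?rpredD.
rewrite rect => root.
have /eqP := congr1 (fun z => 'Re z) root; rewrite Re_rect // raddf0 subr_eq0 => /eqP det.
have /eqP := congr1 (fun z => 'Im z) root; rewrite Im_rect // raddf0 oppr_eq0.
by rewrite mulf_eq0 (negbTE w_neq0) => /eqP.
Qed.

Lemma char_poly2_imag_neq0 : 0 <= b * c -> char_poly2 a b c d ('i * w) != 0.
Proof.
move=> bc_ge0; apply/eqP => /char_poly2_imag_root[/eqP tr det].
move: tr; rewrite addr_eq0 => /eqP a_def.
have w2_gt0 : 0 < w ^+ 2 by rewrite real_exprn_even_gt0 // w_neq0 orbT.
have : w ^+ 2 <= 0.
  rewrite -det a_def mulNr -opprD oppr_le0 -expr2 addr_ge0 //.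
  by rewrite -realEsqr.
by move/(lt_le_trans w2_gt0); rewrite ltxx.
Qed.

End ImaginaryRoots.

Lemma jacS_lower_left0 {F : fieldType} {b lam gam m mu r K beta delta e n p B I : F} :
  forall i j : 'I_4, (1 < i)%N -> (j < 2)%N ->
  jacS b lam gam m mu r K beta delta e n p B I 0 0 i j = 0.
Proof.
move=> i j; rewrite mxE.
by case: i j => [[|[|[|[|i]]]] ?] [[|[|j]] ?] //= _ _; rewrite ?mulr0 ?oppr0.
Qed.

Ltac real_closure :=
  repeat first [ assumption | apply: gtr0_real; assumption
               | apply: realD | apply: realM | apply: realX | rewrite realN | rewrite realV ].

Section JacobianAtE4.
Variable C : numClosedFieldType.
Variables b lam gam m mu r K beta delta e n p : C.
Hypotheses (b_gt0 : 0 < b) (gam_gt0 : 0 < gam) (m_gt0 : 0 < m) (mu_gt0 : 0 < mu).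
Hypotheses (r_gt0 : 0 < r) (beta_gt0 : 0 < beta) (e_gt0 : 0 < e) (n_gt0 : 0 < n).
Hypothesis I_num_gt0 : 0 < b * gam - m * mu.

Local Notation J := (jacS_E4 b lam gam m mu r K beta delta e n p).
Local Notation B := (E4_B b gam m mu).
Local Notation I := (E4_I b gam m mu).

Let B_real : B \is Num.real.
Proof. rewrite /E4_B; real_closure. Qed.

Let I_gt0 : 0 < I.
Proof. by rewrite divr_gt0 ?mulr_gt0. Qed.

Let I_real : I \is Num.real. Proof. exact: gtr0_real. Qed.

Lemma jacS_E4_trace_bees : J 0 0 + J 1 1 = - (b * gam / mu).
Proof.
have mu_neq0 : mu != 0 by rewrite gt_eqF.
have gam_neq0 : gam != 0 by rewrite gt_eqF.
rewrite !mxE /= !mulr0 !subr0.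
have -> : B + I = mu / gam by rewrite /E4_B /E4_I; field; rewrite gam_neq0 mu_neq0.
by rewrite /E4_B /E4_I; field; rewrite gam_neq0 mu_neq0.
Qed.

Lemma jacS_E4_bees_imag_neq0 w : w \is Num.real -> w != 0 ->
  char_poly2 (J 0 0) (J 0 1) (J 1 0) (J 1 1) ('i * w) != 0.
Proof.
move=> w_real w_neq0; apply/eqP => /char_poly2_imag_root[] //;
  try by rewrite !mxE /= ?(mulr0, subr0, addr0); real_closure.
by move/eqP; rewrite jacS_E4_trace_bees oppr_eq0 gt_eqF ?divr_gt0 ?mulr_gt0.
Qed.

Lemma jacS_E4_mites_imag_neq0 w : w \is Num.real -> w != 0 ->
  char_poly2 (J 2 2) (J 2 3) (J 3 2) (J 3 3) ('i * w) != 0.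
Proof.
move=> w_real w_neq0; rewrite !mxE /=.
rewrite !(addr0, mulr0, mul0r, subr0, oppr0, add0r, mul0rn, mulr1).
apply: char_poly2_imag_neq0 => //; try by real_closure.
exact: ltW (mulr_gt0 r_gt0 (mulr_gt0 beta_gt0 I_gt0)).
Qed.

End JacobianAtE4.

Theorem mainTheorem10 (C : numClosedFieldType)
  (b lam gam m mu r K beta delta e n p : C) :
  0 < b -> 0 < lam -> 0 < gam -> 0 < m -> 0 < mu -> 0 < r -> 0 < K ->
  0 < beta -> 0 < delta -> 0 < e -> 0 < n -> 0 < p ->
  0 < b * gam - m * mu -> b * gam - m * mu < mu ^+ 2 ->
  forall w : C, w \is Num.real -> w != 0 ->
    ~~ eigenvalue (jacS_E4 b lam gam m mu r K beta delta e n p) ('i * w).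
Proof.
move=> b0 _ g0 m0 mu0 r0 _ be0 _ e0 n0 _ q0 _ w w_real w_neq0.
apply/negP => /(eigenvalue_ublock4 jacS_lower_left0)[].
- exact/eqP/(jacS_E4_bees_imag_neq0 lam r K beta delta e n p b0 g0 m0 mu0 q0).
- exact/eqP/(jacS_E4_mites_imag_neq0 lam K delta p b0 g0 m0 mu0 r0 be0 e0 n0 q0).
Qed.
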